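(* A bipartite graph $G$ satisfies $\mathrm{diss}(G)=\alpha(G)$ if and only if there is no induced matching $N$ in $G$ such that every maximum matching of $G$ contains at least one edge of $N$.
   Context: All graphs are finite, simple and undirected. A set $I$ of vertices of a graph $G$ is a dissociation set if the induced subgraph $G[I]$ has maximum degree at most $1$; $\mathrm{diss}(G)$ is the maximum order of a dissociation set in $G$. $\alpha(G)$ is the independence number. An induced matching is a matching $N$ such that the subgraph of $G$ induced by the vertices covered by $N$ has edge set exactly $N$. *)

From mathcomp Require Import all_boot.
Set Implicit Arguments. Unset Strict Implicit. Unset Printing Implicit Defensive.

Definition simple_graph (T : finType) (e : rel T) : Prop :=
  symmetric e /\ irreflexive e.

Definition bipartite (T : finType) (e : rel T) : Prop :=
  exists c : T -> bool, forall x y, e x y -> c x != c y.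

Definition independent (T : finType) (e : rel T) (I : {set T}) : bool :=
  [forall x in I, forall y in I, ~~ e x y].

Definition dissociation (T : finType) (e : rel T) (I : {set T}) : bool :=
  [forall x in I, #|[set y in I | e x y]| <= 1].

Definition alpha (T : finType) (e : rel T) : nat :=
  \max_(I : {set T} | independent e I) #|I|.

Definition diss (T : finType) (e : rel T) : nat :=
  \max_(I : {set T} | dissociation e I) #|I|.

Definition is_edge (T : finType) (e : rel T) (f : {set T}) : bool :=
  [exists u, exists v, e u v && (f == [set u; v])].

Definition matching (T : finType) (e : rel T) (M : {set {set T}}) : bool :=
  [forall f in M, is_edge e f] &&
  [forall f in M, forall g in M, (f != g) ==> [disjoint f & g]].

Definition maximum_matching (T : finType) (e : rel T) (M : {set {set T}}) : bool :=
  matching e M && [forall M' : {set {set T}}, matching e M' ==> (#|M'| <= #|M|)].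

Definition induced_matching (T : finType) (e : rel T) (N : {set {set T}}) : bool :=
  matching e N &&
  [forall u in cover N, forall v in cover N, e u v ==> ([set u; v] \in N)].

From mathcomp Require Import all_boot zify.
Set Implicit Arguments. Unset Strict Implicit. Unset Printing Implicit Defensive.

(* Write nu for the matching number.  In a bipartite graph alpha + nu = |V|
   (Koenig's theorem, obtained from the deficiency version of Hall's theorem),
   and in any graph |M| + |I| <= |V| whenever every edge of the matching M has
   a vertex outside I.
   If I is a dissociation set, the edges inside I form an induced matching N;
   a maximum matching avoiding N has a vertex outside I on each edge, so
   |I| <= |V| - nu = alpha.  Conversely, if an induced matching N meets every
   maximum matching, deleting N lowers nu and hence raises alpha; since an
   independent set of G - N is a dissociation set of G, diss >= alpha (G - N)
   > alpha G. *)

Section Hall.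
Variables (L R : finType).
Implicit Types (E : L -> R -> bool) (A B S U : {set L}).

Definition nbh E S : {set R} := [set y | [exists x in S, E x y]].

Definition hall_condition E A := forall S, S \subset A -> #|S| <= #|nbh E S|.

Definition hall_matching E A (f : L -> option R) :=
  {in A, forall x, exists2 y, f x = Some y & E x y} /\ {in A &, injective f}.

Lemma nbhP E S y : reflect (exists2 x, x \in S & E x y) (y \in nbh E S).
Proof.
rewrite inE; apply: (iffP existsP) => [[x /andP[]]|[x xS Exy]]; first by exists x.
by exists x; rewrite xS.
Qed.

Lemma hall_condition_sub E A B : B \subset A -> hall_condition E A -> hall_condition E B.
Proof. by move=> sBA hA S sSB; apply: hA (subset_trans sSB sBA). Qed.

Lemma hall_matching_union E A B f g :
  [disjoint A & B] -> hall_matching E A f -> hall_matching E B g ->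
  {in A & B, forall x x', f x != g x'} ->
  hall_matching E (A :|: B) (fun x => if x \in A then f x else g x).
Proof.
move=> dAB [fE f_inj] [gE g_inj] fg; split=> [x|x x'].
  by rewrite in_setU; case: ifP => [xA _|_ xB]; [apply: fE | apply: gE].
rewrite !in_setU; case: ifP => xA; case: ifP => x'A /= xAB x'AB.
- exact: f_inj.
- by move/eqP; rewrite (negbTE (fg x x' xA _)) ?(orFb _ x'AB).
- by move/esym/eqP; rewrite (negbTE (fg x' x x'A _)) ?(orFb _ xAB).
- exact: g_inj.
Qed.

Lemma hall_matching_mono E E' A f :
  (forall x y, E x y -> E' x y) -> hall_matching E A f -> hall_matching E' A f.
Proof. by move=> EE' [fE f_inj]; split=> // x /fE[y fx Exy]; exists y; auto. Qed.

Lemma hall_condition_critical E A S :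
  hall_condition E A -> S \subset A -> #|nbh E S| <= #|S| ->
  hall_condition (fun x y => E x y && (y \notin nbh E S)) (A :\: S).
Proof.
set E' := fun x y => _; move=> hA sSA critS U sU.
have dUS : [disjoint U & S].
  by apply: disjointWl sU _; rewrite disjoints_subset setDE subsetIr.
have sUA : U \subset A := subset_trans sU (subsetDl A S).
have := hA (U :|: S); rewrite subUset sSA sUA => /(_ isT).
rewrite cardsU (disjoint_setI0 dUS) cards0 subn0.
have : nbh E (U :|: S) \subset nbh E' U :|: nbh E S.
  apply/subsetP=> y /nbhP[x]; rewrite !in_setU => /orP[xU|xS] Exy.
    case: (boolP (y \in nbh E S)) => ynS; rewrite ?orbT // orbF.
    by apply/nbhP; exists x; rewrite /E' ?Exy.
  by apply/orP; right; apply/nbhP; exists x.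
move/subset_leq_card; have := cardsUI (nbh E' U) (nbh E S); lia.
Qed.

Lemma hall_condition_surplus E A a b :
  a \in A -> (forall S, S \proper A -> S != set0 -> #|S| < #|nbh E S|) ->
  hall_condition (fun x y => E x y && (y != b)) (A :\ a).
Proof.
set E' := fun x y => _; move=> aA surplus U sU.
have [->|U_n0] := eqVneq U set0; first by rewrite cards0.
have pUA : U \proper A.
  apply/properP; split; first exact: subset_trans sU (subsetDl _ _).
  by exists a => //; apply/negP=> /(subsetP sU); rewrite !inE eqxx.
have : nbh E U \subset b |: nbh E' U.
  apply/subsetP=> y /nbhP[x xU Exy]; rewrite in_setU1.
  by case: eqVneq => //= yb; apply/nbhP; exists x; rewrite // /E' Exy.
move/subset_leq_card; have := surplus U pUA U_n0; rewrite cardsU1; lia.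
Qed.

Theorem hall_marriage E A : hall_condition E A -> exists f, hall_matching E A f.
Proof.
move: {2}#|A| (leqnn #|A|) => n; elim: n E A => [|n IH] E A szA hallA.
  exists (fun _ => None); move: szA; rewrite leqn0 => /eqP/cards0_eq->.
  by split=> x; rewrite inE.
have [->|[a aA]] := set_0Vmem A.
  by exists (fun _ => None); split=> x; rewrite inE.
have [/existsP[S /and3P[pSA S_n0 critS]]|no_crit] :=
  boolP [exists S : {set L}, [&& S \proper A, S != set0 & #|nbh E S| <= #|S|]].
- have sSA := proper_sub pSA.
  have [f fS] : exists f, hall_matching E S f.
    apply: IH (hall_condition_sub sSA hallA).
    by have := proper_card pSA; lia.
  have [g gAS] : exists g,
      hall_matching (fun x y => E x y && (y \notin nbh E S)) (A :\: S) g.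
    apply: IH (hall_condition_critical hallA sSA critS).
    rewrite cardsDS //; have := subset_leq_card sSA.
    by have := card_gt0 S; rewrite S_n0; lia.
  exists (fun x => if x \in S then f x else g x).
  have <- : S :|: A :\: S = A by rewrite -{2}(setID A S) (setIidPr sSA).
  apply: hall_matching_union (hall_matching_mono _ gAS) _ => //.
  - by rewrite disjoint_sym disjoints_subset setDE subsetIr.
  - by move=> x y /andP[].
  - move=> x x' xS x'AS; have [y -> Exy] := fS.1 x xS.
    have [y' -> /andP[_]] := gAS.1 x' x'AS.
    by apply: contra => /eqP[<-]; apply/nbhP; exists x.
- have [b Eab] : exists b, E a b.
    have := hallA [set a]; rewrite sub1set aA cards1 => /(_ isT).
    by rewrite card_gt0 => /set0Pn[b /nbhP[x /set1P-> Eab]]; exists b.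
  have [g gA] : exists g, hall_matching (fun x y => E x y && (y != b)) (A :\ a) g.
    apply: IH; first by move: szA; rewrite (cardsD1 a A) aA; lia.
    apply: hall_condition_surplus aA _ => S pSA S_n0.
    by have := existsPn no_crit S; rewrite pSA S_n0 /= -ltnNge.
  exists (fun x => if x \in [set a] then Some b else g x); rewrite -(setD1K aA).
  apply: hall_matching_union (hall_matching_mono _ gA) _ => //.
  - by rewrite disjoints1 !inE eqxx.
  - by split=> [x /set1P->|x x' /set1P-> /set1P->]; first by exists b.
  - by move=> x y /andP[].
  - by move=> x x' _ /(gA.1 x')[y' -> /andP[_]]; rewrite eq_sym.
Qed.

End Hall.

Lemma hall_condition_pad (L R : finType) (E : L -> R -> bool) (A : {set L}) d :
  (forall S : {set L}, S \subset A -> #|S| <= #|nbh E S| + d) ->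
  hall_condition (fun x (y : R + 'I_d) => if y is inl y' then E x y' else true) A.
Proof.
set E' := fun x y => _; move=> defA S sSA.
have [->|[s sS]] := set_0Vmem S; first by rewrite cards0.
have : inl @: nbh E S :|: inr @: [set: 'I_d] \subset nbh E' S.
  apply/subsetP=> y; rewrite in_setU => /orP[] /imsetP[z zS ->]; apply/nbhP.
    by case/nbhP: zS => x xS Exz; exists x.
  by exists s.
move/subset_leq_card; rewrite cardsU disjoint_setI0; last first.
  by apply/pred0P=> y; apply/andP=> -[/imsetP[? _ ->] /imsetP[]].
rewrite cards0 subn0 !card_imset ?cardsT ?card_ord; [|exact: inr_inj|exact: inl_inj].
exact: leq_trans (defA S sSA).
Qed.

Theorem hall_deficiency (L R : finType) (E : L -> R -> bool) (A : {set L}) :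
  exists (S0 B : {set L}) f, [/\ S0 \subset A, B \subset A, hall_matching E B f &
                     #|A| + #|nbh E S0| <= #|B| + #|S0|].
Proof.
pose excess (S : {set L}) := #|S| + #|R| - #|nbh E S|.
have [S0 sS0A maxS0] := @arg_maxnP _ set0 (fun S => S \subset A) excess (sub0set A).
have nbh0 : nbh E set0 = set0.
  by apply/setP=> y; rewrite in_set0; apply/negbTE/negP=> /nbhP[x]; rewrite in_set0.
have nbhR S : #|nbh E S| <= #|R| by rewrite -cardsT subset_leq_card ?subsetT.
have := maxS0 set0 (sub0set A); rewrite /excess nbh0 !cards0.
have := nbhR S0; set d := #|S0| - #|nbh E S0| => nbhS0R nbhS0.
have [f [fE f_inj]] : exists f, hall_matching
    (fun x (y : R + 'I_d) => if y is inl y' then E x y' else true) A f.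
  apply/hall_marriage/hall_condition_pad => S sSA.
  by have := maxS0 S sSA; have := nbhR S; rewrite /excess; lia.
pose B := [set x in A | if f x is Some (inl _) then true else false].
have sBA : B \subset A by apply/subsetP=> x; rewrite inE => /andP[].
exists S0, B, (fun x => if f x is Some (inl y) then Some y else None); split=> //.
- split=> [x|x x'].
    by rewrite inE => /andP[xA]; have [[y|i] -> Exy] := fE x xA => // _; exists y.
  rewrite !inE => /andP[xA fxl] /andP[x'A fx'l]; move: fxl fx'l.
  case fx: (f x) => [[y|]|] //; case fx': (f x') => [[y'|]|] // _ _ [yy'].
  by apply: f_inj; rewrite // fx fx' yy'.
- have : #|A :\: B| <= d.
    rewrite -(card_in_imset (f := f)); last first.
      by move=> x x' /setDP[xA _] /setDP[x'A _]; apply: f_inj.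
    have card_pad : #|[set Some (@inr R _ i) | i : 'I_d]| = d.
      by rewrite card_imset ?cardsT ?card_ord // => i j [].
    apply: leq_trans (subset_leq_card _) (eq_leq card_pad).
    apply/subsetP=> _ /imsetP[x /setDP[xA xB] ->].
    have [[y|i] fx _] := fE x xA; first by move: xB; rewrite inE xA fx.
    by rewrite fx; apply/imsetP; exists i.
  rewrite cardsDS //; have := subset_leq_card sBA; lia.
Qed.

Section Konig.
Variables (T : finType) (e : rel T) (c : T -> bool).
Hypothesis e_sym : symmetric e.
Hypothesis e_col : forall x y, e x y -> c x != c y.

Let A := [set x | ~~ c x].
Implicit Types (S B : {set T}).

Let inA x : (x \in A) = ~~ c x. Proof. by rewrite inE. Qed.

Lemma nbh_colour S y : S \subset A -> y \in nbh e S -> c y.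
Proof.
move=> sSA /nbhP[x xS exy]; have := e_col exy; move: (subsetP sSA x xS).
by rewrite inE; case: (c x); case: (c y).
Qed.

(* The complement of the vertex cover [nbh e S :|: (A :\: S)]. *)
Lemma independent_konig S :
  S \subset A -> independent e (S :|: ~: (nbh e S :|: A)).
Proof.
move=> sSA; apply/forall_inP=> x xJ; apply/forall_inP=> y yJ; apply/negP=> exy.
move: xJ yJ (e_col exy); rewrite !(in_setU, in_setC, negb_or) !inA !negbK.
case/orP=> [xS|/andP[xN cx]]; case/orP=> [yS|/andP[yN cy]].
- by move: (subsetP sSA x xS) (subsetP sSA y yS); rewrite !inA => /negbTE-> /negbTE->.
- by case/negP: yN; apply/nbhP; exists x.
- by case/negP: xN; apply/nbhP; exists y; rewrite // e_sym.
- by rewrite cx cy.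
Qed.

Lemma matching_of_hall_matching B f :
  B \subset A -> hall_matching e B f -> exists M, matching e M /\ #|M| = #|B|.
Proof.
move=> sBA [fE f_inj]; pose p x := odflt x (f x).
have pB x : x \in B -> [/\ f x = Some (p x), e x (p x), ~~ c x & c (p x)].
  move=> xB; have [y fx exy] := fE x xB; rewrite /p fx.
  have := e_col exy; move: (subsetP sBA x xB); rewrite inE => /negbTE cx.
  by rewrite cx; case: (c y).
have same_edge x y z : x \in B -> y \in B ->
    z \in [set x; p x] -> z \in [set y; p y] -> x = y.
  move=> xB yB; have [fx _ cx cpx] := pB x xB; have [fy _ cy cpy] := pB y yB.
  rewrite !inE => /orP[]/eqP-> /orP[]/eqP // => [xpy|pxy|pxpy].
  - by move: cx; rewrite xpy cpy.
  - by move: cy; rewrite -pxy cpx.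
  - by apply: f_inj; rewrite // fx fy pxpy.
exists [set [set x; p x] | x in B]; split; last first.
  apply: card_in_imset => x y xB yB exy.
  by apply: (same_edge x y x); rewrite // -?exy set21.
apply/andP; split; apply/forall_inP=> _ /imsetP[x xB ->].
  have [_ expx _ _] := pB x xB.
  by apply/existsP; exists x; apply/existsP; exists (p x); rewrite expx eqxx.
apply/forall_inP=> _ /imsetP[y yB ->]; apply/implyP=> neq.
apply/pred0P=> z; apply/andP=> -[zx zy]; case/eqP: neq.
by rewrite (same_edge x y z).
Qed.

Theorem konig_cover :
  exists J M, [/\ independent e J, matching e M & #|T| <= #|J| + #|M|].
Proof.
have [S [B [f [sSA sBA fB card_def]]]] := hall_deficiency e A.
have [M [matM cardM]] := matching_of_hall_matching sBA fB.
exists (S :|: ~: (nbh e S :|: A)), M; split=> //; first exact: independent_konig.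
have dS : [disjoint S & ~: (nbh e S :|: A)].
  by rewrite disjoints_subset setCK subsetU // sSA orbT.
have dN : [disjoint nbh e S & A].
  by apply/pred0P=> y /=; apply/andP=> -[/(nbh_colour sSA) cy]; rewrite inA cy.
have := cardsC (nbh e S :|: A); rewrite cardsU (disjoint_setI0 dN) cards0 subn0.
rewrite cardsU (disjoint_setI0 dS) cards0 subn0 cardM; lia.
Qed.

End Konig.

Lemma bigmax_attained (I : finType) (P : pred I) (F : I -> nat) i0 :
  P i0 -> exists2 i, P i & \max_(j | P j) F j = F i.
Proof.
by move=> Pi0; rewrite (bigmax_eq_arg i0) //; case: arg_maxnP => // i Pi _; exists i.
Qed.

Lemma leq_card_disjoint_setC (T : finType) (M : {set {set T}}) (I : {set T}) :
  {in M &, forall f g : {set T}, f != g -> [disjoint f & g]} ->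
  {in M, forall f : {set T}, exists2 x, x \in f & x \notin I} ->
  #|M| + #|I| <= #|T|.
Proof.
move=> dM meetC; pose p f := [pick x in f :\: I].
have pM f : f \in M -> exists2 x, p f = Some x & x \in f :\: I.
  move=> fM; rewrite /p; case: pickP => [x xf|none]; first by exists x.
  by have [x xf xI] := meetC f fM; move: (none x); rewrite inE xf xI.
have : #|p @: M| <= #|Some @: ~: I|.
  apply/subset_leq_card/subsetP=> _ /imsetP[f fM ->].
  by have [x -> /setDP[_ xI]] := pM f fM; rewrite imset_f ?inE.
rewrite (card_in_imset (f := p)); last first.
  move=> f g fM gM; have [x -> /setDP[xf _]] := pM f fM.
  have [y -> /setDP[yg _]] := pM g gM => -[xy]; apply/eqP/negPn/negP=> /(dM f g fM gM).
  by move/pred0P/(_ x); rewrite /= xf xy yg.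
rewrite card_imset; last exact: Some_inj.
by rewrite -(cardsC I) addnC leq_add2l.
Qed.

Section Matching.
Variables (T : finType) (e : rel T).
Implicit Types (M : {set {set T}}).

Lemma matching_disjoint M :
  matching e M -> {in M &, forall f g : {set T}, f != g -> [disjoint f & g]}.
Proof.
case/andP=> _ /forall_inP dM f g fM gM.
by move/forall_inP/(_ g gM): (dM f fM) => /implyP.
Qed.

Lemma matching_edge M f :
  matching e M -> f \in M -> exists u v, e u v /\ f = [set u; v].
Proof.
by case/andP=> /forall_inP eM _ /eM/existsP[u /existsP[v /andP[euv /eqP->]]]; exists u, v.
Qed.

Lemma independent0 : independent e set0.
Proof. by apply/forall_inP=> x; rewrite inE. Qed.

Lemma matching0 : matching e set0.
Proof. by apply/andP; split; apply/forall_inP=> f; rewrite inE. Qed.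

End Matching.

Definition nu (T : finType) (e : rel T) : nat :=
  \max_(M : {set {set T}} | matching e M) #|M|.

Definition del_edges (T : finType) (e : rel T) (N : {set {set T}}) : rel T :=
  fun u v => e u v && ([set u; v] \notin N).

Definition edges_in (T : finType) (e : rel T) (I : {set T}) : {set {set T}} :=
  [set f | is_edge e f & f \subset I].

Section Graph.
Variables (T : finType) (e : rel T).
Hypothesis e_sym : symmetric e.
Hypothesis e_irr : irreflexive e.
Implicit Types (I : {set T}) (M N : {set {set T}}).

Lemma alpha_add_nu_le : alpha e + nu e <= #|T|.
Proof.
rewrite /alpha /nu.
have [I indI ->] := bigmax_attained (fun I : {set T} => #|I|) (independent0 e).
have [M matM ->] := bigmax_attained (fun M : {set {set T}} => #|M|) (matching0 e).
rewrite addnC; apply: leq_card_disjoint_setC (matching_disjoint matM) _.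
move=> f /(matching_edge matM)[u [v [euv ->]]].
have [uI|] := boolP (u \in I); last by exists u; rewrite ?set21.
have [vI|] := boolP (v \in I); last by exists v; rewrite ?set22.
by move/forall_inP/(_ u uI)/forall_inP/(_ v vI): indI; rewrite euv.
Qed.

Lemma alpha_add_nu : bipartite e -> alpha e + nu e = #|T|.
Proof.
case=> c e_col; apply/eqP; rewrite eqn_leq alpha_add_nu_le /=.
have [J [M [indJ matM cardT]]] := konig_cover e_sym e_col.
apply: leq_trans cardT (leq_add _ _).
  exact: (leq_bigmax_cond (F := fun I : {set T} => #|I|)).
exact: (leq_bigmax_cond (F := fun M : {set {set T}} => #|M|)).
Qed.

Lemma maximum_matchingE M : maximum_matching e M = matching e M && (#|M| == nu e).
Proof.
rewrite /maximum_matching; case matM: (matching e M) => //=.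
apply/forallP/eqP=> [maxM|-> M'].
  apply/eqP; rewrite eqn_leq (leq_bigmax_cond (F := fun M : {set {set T}} => #|M|)) //=.
  by apply/bigmax_leqP=> M' /(implyP (maxM M')).
by apply/implyP=> matM'; apply: (leq_bigmax_cond (F := fun M : {set {set T}} => #|M|)).
Qed.

Lemma exists_maximum_matching : exists M, maximum_matching e M.
Proof.
have [M matM cardM] := bigmax_attained (fun M : {set {set T}} => #|M|) (matching0 e).
by exists M; rewrite maximum_matchingE matM /nu cardM eqxx.
Qed.

Lemma alpha_le_diss : alpha e <= diss e.
Proof.
apply/bigmax_leqP=> I indI; apply: (leq_bigmax_cond (F := fun I : {set T} => #|I|)).
apply/forall_inP=> x xI; rewrite (_ : [set y in I | e x y] = set0) ?cards0 //.
apply/setP=> y; rewrite !inE; apply/negbTE/andP=> -[yI].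
exact/negP/(forall_inP (forall_inP indI x xI) y yI).
Qed.

Lemma matching_del_edges N M :
  matching (del_edges e N) M -> matching e M /\ {in M, forall f, f \notin N}.
Proof.
move=> matM; have /andP[_ dM] := matM; split; last first.
  by move=> f /(matching_edge matM)[u [v [/andP[_ uvN] ->]]].
apply/andP; split=> //.
apply/forall_inP=> f /(matching_edge matM)[u [v [/andP[euv _] ->]]].
by apply/existsP; exists u; apply/existsP; exists v; rewrite euv eqxx.
Qed.

Lemma dissociation_del_edges N I :
  matching e N -> independent (del_edges e N) I -> dissociation e I.
Proof.
move=> matN indI; apply/forall_inP=> x xI; apply/card_le1_eqP=> y y'.
have edgeN z : z \in [set z in I | e x z] -> [set x; z] \in N.
  rewrite inE => /andP[zI exz]; move: (forall_inP (forall_inP indI x xI) z zI).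
  by rewrite /del_edges exz negbK.
move=> /[dup] yx /edgeN yN /[dup] y'x /edgeN y'N.
have [//|neq] := eqVneq [set x; y] [set x; y'].
  move/setP/(_ y); rewrite set22 => /esym/set2P[yx'|//].
  by move: yx; rewrite inE yx' e_irr andbF.
by move/pred0P/(_ x): (matching_disjoint matN yN y'N neq); rewrite /= !set21.
Qed.

Lemma edge_at u v z : e u v -> z \in [set u; v] ->
  exists y, [set u; v] = [set z; y] /\ e z y.
Proof.
move=> euv /set2P[->|->]; first by exists v.
by exists u; rewrite setUC e_sym.
Qed.

Lemma dissociation_neighbour_uniq I x y y' :
  dissociation e I -> x \in I -> y \in I -> y' \in I -> e x y -> e x y' -> y = y'.
Proof.
move=> dissI xI yI y'I exy exy'.
by move/card_le1_eqP: (forall_inP dissI x xI) => /(_ y' y); apply; rewrite inE ?yI ?y'I.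
Qed.

Lemma induced_matching_edges_in I :
  dissociation e I -> induced_matching e (edges_in e I).
Proof.
move=> dissI; have sub_I f : f \in edges_in e I -> f \subset I by rewrite inE => /andP[].
apply/andP; split; first (apply/andP; split).
- by apply/forall_inP=> f; rewrite inE => /andP[].
- apply/forall_inP=> f fN; apply/forall_inP=> g gN; apply/implyP=> neq.
  apply/pred0P=> z /=; apply/negP=> /andP[zf zg]; case/eqP: neq.
  have := fN; have := gN; rewrite !inE.
  case/andP=> /existsP[u' /existsP[v' /andP[euv' /eqP gE]]] _.
  case/andP=> /existsP[u /existsP[v /andP[euv /eqP fE]]] _.
  rewrite fE in zf; rewrite gE in zg.
  have [y [fz ezy]] := edge_at euv zf; have [y' [gz ezy']] := edge_at euv' zg.
  rewrite fE gE fz gz (@dissociation_neighbour_uniq I z y y') //.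
  + by apply: (subsetP (sub_I f fN)); rewrite fE.
  + by apply: (subsetP (sub_I f fN)); rewrite fE fz set22.
  + by apply: (subsetP (sub_I g gN)); rewrite gE gz set22.
- have coverI u : u \in cover (edges_in e I) -> u \in I.
    by case/bigcupP=> f /sub_I/subsetP; apply.
  apply/forall_inP=> u /coverI uI; apply/forall_inP=> v /coverI vI; apply/implyP=> euv.
  rewrite inE subUset !sub1set uI vI !andbT.
  by apply/existsP; exists u; apply/existsP; exists v; rewrite euv eqxx.
Qed.

Lemma dissociation_le_alpha I M : bipartite e -> maximum_matching e M ->
  {in M, forall f, f \notin edges_in e I} -> #|I| <= alpha e.
Proof.
rewrite maximum_matchingE => bip /andP[matM /eqP cardM] avoidI.
have : #|M| + #|I| <= #|T|.
  apply: leq_card_disjoint_setC (matching_disjoint matM) _ => f fM.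
  have [u [v [euv fE]]] := matching_edge matM fM; move: (avoidI f fM).
  rewrite inE negb_and {1}fE; case/orP=> [/existsPn/(_ u)/existsPn/(_ v)|/subsetPn//].
  by rewrite euv eqxx.
by have := alpha_add_nu bip; lia.
Qed.

End Graph.

Lemma nu_del_edges_lt (T : finType) (e : rel T) (N : {set {set T}}) :
  (forall M, maximum_matching e M -> exists2 f, f \in N & f \in M) ->
  nu (del_edges e N) < nu e.
Proof.
move=> hitN; have [M] := exists_maximum_matching (del_edges e N).
rewrite maximum_matchingE => /andP[matM /eqP <-].
have [mat_eM avoidN] := matching_del_edges matM.
rewrite ltn_neqAle (leq_bigmax_cond (F := fun M : {set {set T}} => #|M|)) // andbT.
apply/eqP=> cardM; have maxM : maximum_matching e M.
  by rewrite maximum_matchingE mat_eM cardM eqxx.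
by have [f fN /avoidN/negP] := hitN M maxM.
Qed.

Lemma alpha_lt_diss (T : finType) (e : rel T) (N : {set {set T}}) :
  symmetric e -> irreflexive e -> bipartite e -> matching e N ->
  (forall M, maximum_matching e M -> exists2 f, f \in N & f \in M) ->
  alpha e < diss e.
Proof.
move=> e_sym e_irr bip matN hitN.
have symN : symmetric (del_edges e N) by move=> u v; rewrite /del_edges e_sym setUC.
have bipN : bipartite (del_edges e N).
  by case: bip => c e_col; exists c => x y /andP[/e_col].
have : alpha (del_edges e N) <= diss e.
  apply/bigmax_leqP=> I indI; apply: (leq_bigmax_cond (F := fun I : {set T} => #|I|)).
  exact: dissociation_del_edges indI.
have := nu_del_edges_lt hitN; have := alpha_add_nu symN bipN.
by have := alpha_add_nu e_sym bip; lia.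
Qed.

Unset Implicit Arguments.

Theorem mainTheorem7 (T : finType) (e : rel T) :
  simple_graph e -> bipartite e ->
  (diss e = alpha e <->
   ~ (exists N : {set {set T}}, induced_matching e N /\
        forall M : {set {set T}}, maximum_matching e M ->
          exists2 f, f \in N & f \in M)).
Proof.
case=> e_sym e_irr bip; split=> [diss_alpha [N [/andP[matN _] hitN]] | no_hit].
  by have := alpha_lt_diss e_sym e_irr bip matN hitN; rewrite diss_alpha ltnn.
apply/eqP; rewrite eqn_leq alpha_le_diss andbT; apply/bigmax_leqP=> I dissI.
have [/existsP[M /andP[maxM /forall_inP avoidI]]|hitI] :=
  boolP [exists M, maximum_matching e M && [forall f in M, f \notin edges_in e I]].
  by apply: (dissociation_le_alpha e_sym bip maxM) => f /avoidI.
case: no_hit; exists (edges_in e I); split; first exact: induced_matching_edges_in.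
move=> M maxM; move: (existsPn hitI M); rewrite maxM => /forall_inPn[f fM /negbNE fI].
by exists f.
Qed.
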